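(* Under Assumptions 1, 2, 4 and 5, the gradient descent iterates satisfy: (i) $\max_{1\le k\le L}\|W_k(t)\|_F$ is unbounded in $t$; (ii) $\sum_{t=0}^\infty\eta_t=\infty$; (iii) for every $R>0$, $\sum_{t:\,W(t)\in B(R)}\eta_t<\infty$.
   Context: Setting: data $(x_i,y_i)_{i=1}^n$ with $x_i\in\mathbb{R}^d$, $\|x_i\|\le 1$, $y_i\in\{-1,+1\}$; $z_i:=y_ix_i$; the data are linearly separable. A depth-$L$ linear network is $W=(W_L,\dots,W_1)$ with $W_k\in\mathbb{R}^{d_k\times d_{k-1}}$, $d_0=d$, $d_L=1$, $w_{\mathrm{prod}}:=(W_L\cdots W_1)^\top$, and $\mathcal{R}(W)=\frac1n\sum_{i=1}^n\ell(\langle w_{\mathrm{prod}},z_i\rangle)$. $B(R):=\{W:\max_k\|W_k\|_F\le R\}$. Gradient descent: $W(t+1)=W(t)-\eta_t\nabla\mathcal{R}(W(t))$, $t=0,1,2,\dots$. Assumption 1: $\ell$ is continuously differentiable, $\ell'<0$ everywhere, $\lim_{x\to-\infty}\ell(x)=\infty$, $\lim_{x\to\infty}\ell(x)=0$. Assumption 2: $\nabla\mathcal{R}(W(0))\ne0$ and $\mathcal{R}(W(0))\le\ell(0)$. Assumption 4: $\ell'$ is $\beta$-Lipschitz and $|\ell'|\le G$. Let $\beta(R):=2L^2R^{2L-2}(\beta+G)$. Assumption 5: $\eta_t=\min\{1/\beta(R_t),1\}$, where the radii $R_t$ satisfy $W(t)\in B(R_t-1)$ for every $t$, and $R_{t+1}=R_t$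 whenever $W(t+1)\in B(R_t-1)$. *)

From Stdlib Require Import Reals Lra Lia.
Open Scope R_scope.

Fixpoint sumR (n : nat) (f : nat -> R) : R :=
  match n with
  | O => 0
  | S m => sumR m f + f m
  end.

(* A depth-L linear network: W k i j = entry (i,j) of W_k (k = 1..L),
   W_k in R^{d k x d (k-1)}. Entries outside these ranges are irrelevant. *)
Definition Params := nat -> nat -> nat -> R.

Fixpoint prodMat (d : nat -> nat) (W : Params) (k : nat) : nat -> nat -> R :=
  match k with
  | O => fun i j => if Nat.eqb i j then 1 else 0
  | S m => fun i j => sumR (d m) (fun l => W (S m) i l * prodMat d W m l j)
  end.

(* w_prod = (W_L ... W_1)^T in R^{d 0} (d L = 1) *)
Definition wprod (d : nat -> nat) (L : nat) (W : Params) : nat -> R :=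
  fun j => prodMat d W L 0%nat j.

Definition inner (m : nat) (u v : nat -> R) : R := sumR m (fun j => u j * v j).

Definition risk (l : R -> R) (n : nat) (z : nat -> nat -> R)
  (d : nat -> nat) (L : nat) (W : Params) : R :=
  / INR n * sumR n (fun i => l (inner (d 0%nat) (wprod d L W) (z i))).

Definition frob (d : nat -> nat) (W : Params) (k : nat) : R :=
  sqrt (sumR (d k) (fun i => sumR (d (k - 1)%nat) (fun j => (W k i j) ^ 2))).

Fixpoint maxFrob (d : nat -> nat) (W : Params) (L : nat) : R :=
  match L with
  | O => 0
  | S O => frob d W 1%nat
  | S m => Rmax (maxFrob d W m) (frob d W (S m))
  end.

Definition inBall (d : nat -> nat) (L : nat) (Rad : R) (W : Params) : Prop :=
  maxFrob d W L <= Rad.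

Definition perturb (W : Params) (k i j : nat) (s : R) : Params :=
  fun k' i' j' =>
    if (Nat.eqb k' k && Nat.eqb i' i && Nat.eqb j' j)%bool
    then W k' i' j' + s else W k' i' j'.

Definition is_gradient (d : nat -> nat) (L : nat) (F : Params -> R)
  (G : Params -> Params) : Prop :=
  forall (W : Params) (k i j : nat),
    (1 <= k <= L)%nat -> (i < d k)%nat -> (j < d (k - 1))%nat ->
    derivable_pt_lim (fun s => F (perturb W k i j s)) 0 (G W k i j).

Definition betaR (L : nat) (beta Gb : R) (Rad : R) : R :=
  2 * (INR L) ^ 2 * Rad ^ (2 * L - 2) * (beta + Gb).

Definition stepsize (L : nat) (beta Gb : R) (Rad : nat -> R) (t : nat) : R :=
  Rmin (1 / betaR L beta Gb (Rad t)) 1.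

From Stdlib Require Import Reals Lra Lia Psatz FunctionalExtensionality Classical.
Open Scope R_scope.

(* Along a segment of a gradient step inside the ball B(R), the second derivative of the risk is
   at most beta(R) times the squared gradient norm, so with eta_t <= 1/beta(R_t) every step
   decreases the risk by eta_t |grad|^2 / 2; hence sum_t eta_t |grad R(W(t))|^2 <= 2 l(0).
   Conversely, once the risk is below l(0) some margin <w_prod, z_i> is bounded below, and
   moving the first layer towards a linear separator shows that the gradient is bounded below
   on every ball. On a ball, the step sizes therefore have a finite sum (iii). If the iterates
   stayed in a ball, R_t would stabilise, the step sizes would be bounded below and the sum
   would diverge; this gives (i). Finally, by Cauchy-Schwarz the distance travelled is at most
   sqrt(2 l(0) sum_t eta_t), so a finite sum of step sizes would contradict (i). *)

Lemma sumR_ext n f g : (forall i, (i < n)%nat -> f i = g i) -> sumR n f = sumR n g.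
Proof.
  induction n as [|n IH]; intros H; simpl; [reflexivity|].
  rewrite IH by (intros; apply H; lia). rewrite H by lia. reflexivity.
Qed.

Lemma sumR_add n f g : sumR n (fun i => f i + g i) = sumR n f + sumR n g.
Proof. induction n as [|n IH]; simpl; [lra|rewrite IH; lra]. Qed.

Lemma sumR_scal n c f : sumR n (fun i => c * f i) = c * sumR n f.
Proof. induction n as [|n IH]; simpl; [lra|rewrite IH; lra]. Qed.

Lemma sumR_mulr n c f : sumR n (fun i => f i * c) = sumR n f * c.
Proof. induction n as [|n IH]; simpl; [lra|rewrite IH; lra]. Qed.

Lemma sumR_sub n f g : sumR n (fun i => f i - g i) = sumR n f - sumR n g.
Proof. induction n as [|n IH]; simpl; [lra|rewrite IH; lra]. Qed.

Lemma sumR_const n c : sumR n (fun _ => c) = INR n * c.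
Proof. induction n as [|n IH]; [simpl; ring|rewrite S_INR; simpl; rewrite IH; ring]. Qed.

Lemma sumR_zero n f : (forall i, (i < n)%nat -> f i = 0) -> sumR n f = 0.
Proof. intros H. rewrite (sumR_ext n f (fun _ => 0)), sumR_const by auto. ring. Qed.

Lemma sumR_le n f g : (forall i, (i < n)%nat -> f i <= g i) -> sumR n f <= sumR n g.
Proof.
  induction n as [|n IH]; intros H; simpl; [lra|].
  assert (sumR n f <= sumR n g) by (apply IH; intros; apply H; lia).
  assert (f n <= g n) by (apply H; lia). lra.
Qed.

Lemma sumR_nonneg n f : (forall i, (i < n)%nat -> 0 <= f i) -> 0 <= sumR n f.
Proof. intros H. rewrite <- (sumR_zero n (fun _ => 0)) by auto. apply sumR_le; auto. Qed.

Lemma sumR_term_le n f i :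
  (forall j, (j < n)%nat -> 0 <= f j) -> (i < n)%nat -> f i <= sumR n f.
Proof.
  induction n as [|n IH]; intros H Hi; [lia|]. simpl.
  assert (0 <= sumR n f) by (apply sumR_nonneg; intros; apply H; lia).
  destruct (Nat.eq_dec i n) as [->|Hin]; [lra|].
  assert (f i <= sumR n f) by (apply IH; [intros; apply H|]; lia).
  assert (0 <= f n) by (apply H; lia). lra.
Qed.

Lemma sumR_abs_le n f : Rabs (sumR n f) <= sumR n (fun i => Rabs (f i)).
Proof.
  induction n as [|n IH]; simpl; [rewrite Rabs_R0; lra|].
  eapply Rle_trans; [apply Rabs_triang|lra].
Qed.

Lemma sumR_exchange n m F :
  sumR n (fun i => sumR m (fun j => F i j)) = sumR m (fun j => sumR n (fun i => F i j)).
Proof.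
  induction n as [|n IH]; simpl.
  - symmetry; apply sumR_zero; auto.
  - rewrite IH, <- sumR_add; reflexivity.
Qed.

Lemma sumR_single n a f :
  (a < n)%nat -> (forall b, (b < n)%nat -> b <> a -> f b = 0) -> sumR n f = f a.
Proof.
  induction n as [|n IH]; intros Ha H; [lia|]. simpl.
  destruct (Nat.eq_dec a n) as [->|Han].
  - rewrite sumR_zero; [ring|]. intros; apply H; lia.
  - rewrite IH, (H n); try ring; try lia. intros; apply H; lia.
Qed.

Lemma sumR_delta n a f :
  (a < n)%nat -> sumR n (fun b => (if Nat.eqb a b then 1 else 0) * f b) = f a.
Proof.
  intros Ha. rewrite (sumR_single n a); auto.
  - rewrite Nat.eqb_refl. ring.
  - intros b _ Hb. destruct (Nat.eqb_spec a b); [lia|ring].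
Qed.

Lemma derivable_pt_lim_sumR n (F F' : nat -> R -> R) s :
  (forall i, (i < n)%nat -> derivable_pt_lim (F i) s (F' i s)) ->
  derivable_pt_lim (fun r => sumR n (fun i => F i r)) s (sumR n (fun i => F' i s)).
Proof.
  induction n as [|n IH]; intros H; simpl.
  - apply derivable_pt_lim_const.
  - apply (derivable_pt_lim_plus (fun r => sumR n (fun i => F i r)) (F n)); [|apply H; lia].
    apply IH; intros; apply H; lia.
Qed.

Lemma finite_pos_min n f :
  (forall i, (i < n)%nat -> 0 < f i) -> exists g, 0 < g /\ forall i, (i < n)%nat -> g <= f i.
Proof.
  induction n as [|n IH]; intros H; [exists 1; split; [lra|intros; lia]|].
  destruct IH as [g [Hg Hle]]; [intros; apply H; lia|].
  exists (Rmin g (f n)). split; [apply Rmin_glb_lt; auto; apply H; lia|].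
  intros i Hi. destruct (Nat.eq_dec i n) as [->|Hin]; [apply Rmin_r|].
  eapply Rle_trans; [apply Rmin_l|apply Hle; lia].
Qed.

Definition mean (n : nat) (f : nat -> R) : R := / INR n * sumR n f.

Lemma mean_le n f c : (0 < n)%nat -> (forall i, (i < n)%nat -> f i <= c) -> mean n f <= c.
Proof.
  intros Hn H. assert (0 < INR n) by (apply lt_0_INR; auto). unfold mean.
  apply Rmult_le_reg_l with (INR n); auto. rewrite <- Rmult_assoc, Rinv_r, Rmult_1_l by lra.
  rewrite <- sumR_const. apply sumR_le; auto.
Qed.

Lemma mean_abs_le n f c : 0 <= c -> (forall i, (i < n)%nat -> Rabs (f i) <= c) -> Rabs (mean n f) <= c.
Proof.
  intros Hc H. destruct n as [|n].
  - unfold mean; simpl. rewrite Rmult_0_r, Rabs_R0; auto.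
  - unfold mean. rewrite Rabs_mult, Rabs_pos_eq by (left; apply Rinv_0_lt_compat, lt_0_INR; lia).
    eapply Rle_trans; [|apply (mean_le (S n) (fun i => Rabs (f i))); auto; lia].
    apply Rmult_le_compat_l; [left; apply Rinv_0_lt_compat, lt_0_INR; lia|apply sumR_abs_le].
Qed.

Lemma mean_gt n f c : (0 < n)%nat -> (forall i, (i < n)%nat -> c < f i) -> c < mean n f.
Proof.
  intros Hn H. assert (0 < INR n) by (apply lt_0_INR; auto). unfold mean.
  apply Rmult_lt_reg_l with (INR n); auto. rewrite <- Rmult_assoc, Rinv_r, Rmult_1_l by lra.
  rewrite <- sumR_const. destruct n as [|n]; [lia|]. simpl.
  assert (sumR n (fun _ => c) <= sumR n f) by (apply sumR_le; intros; left; apply H; lia).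
  assert (c < f n) by (apply H; lia). lra.
Qed.

Lemma Rabs_le_of_sq_le a b : 0 <= b -> a ^ 2 <= b ^ 2 -> Rabs a <= b.
Proof. intros Hb H. rewrite <- pow2_abs in H. assert (0 <= Rabs a) by apply Rabs_pos. nra. Qed.

Lemma sq_le_sq_nonneg a b : 0 <= a -> 0 <= b -> a ^ 2 <= b ^ 2 -> a <= b.
Proof. intros Ha Hb H. rewrite <- (Rabs_pos_eq a Ha). apply Rabs_le_of_sq_le; auto. Qed.

Lemma discriminant_le a b c :
  0 <= a -> (forall t, 0 <= a * t ^ 2 - 2 * b * t + c) -> b ^ 2 <= a * c.
Proof.
  intros Ha H. destruct (Rle_lt_or_eq_dec 0 a Ha) as [Hpos|<-].
  - specialize (H (b / a)).
    replace (a * (b / a) ^ 2 - 2 * b * (b / a) + c) with ((a * c - b ^ 2) / a) in H by (field; lra).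
    assert (0 <= a * c - b ^ 2); [|lra].
    replace (a * c - b ^ 2) with (a * ((a * c - b ^ 2) / a)) by (field; lra).
    apply Rmult_le_pos; lra.
  - destruct (Req_dec b 0) as [->|Hb]; [lra|].
    specialize (H ((c + 1) / (2 * b))).
    replace (0 * ((c + 1) / (2 * b)) ^ 2 - 2 * b * ((c + 1) / (2 * b)) + c) with (-1) in H
      by (field; auto). lra.
Qed.

(* Sums over the entries of vectors, matrices and whole networks are all positive linear
   functionals; Cauchy-Schwarz and the norm they induce are proved once for all of them. *)
Section PositiveFunctional.

Variables (I : Type) (Sum : (I -> R) -> R).
Hypothesis Sum_add : forall f g, Sum (fun i => f i + g i) = Sum f + Sum g.
Hypothesis Sum_scal : forall c f, Sum (fun i => c * f i) = c * Sum f.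
Hypothesis Sum_nonneg : forall f, (forall i, 0 <= f i) -> 0 <= Sum f.

Lemma pf_sq_nonneg u : 0 <= Sum (fun i => u i ^ 2).
Proof. apply Sum_nonneg; intros; apply pow2_ge_0. Qed.

Lemma pf_cauchy_schwarz u v :
  Sum (fun i => u i * v i) ^ 2 <= Sum (fun i => v i ^ 2) * Sum (fun i => u i ^ 2).
Proof.
  apply discriminant_le; [apply pf_sq_nonneg|]. intros t.
  replace (Sum (fun i => v i ^ 2) * t ^ 2 - 2 * Sum (fun i => u i * v i) * t + Sum (fun i => u i ^ 2))
    with (Sum (fun i => (t * v i - u i) ^ 2)); [apply pf_sq_nonneg|].
  transitivity (Sum (fun i => t ^ 2 * v i ^ 2 + (-2 * t) * (u i * v i) + u i ^ 2)).
  - f_equal; extensionality i; ring.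
  - rewrite !Sum_add, !Sum_scal; ring.
Qed.

Definition pf_norm (u : I -> R) : R := sqrt (Sum (fun i => u i ^ 2)).

Lemma pf_norm_nonneg u : 0 <= pf_norm u.
Proof. apply sqrt_pos. Qed.

Lemma pf_norm_sq u : pf_norm u ^ 2 = Sum (fun i => u i ^ 2).
Proof. apply pow2_sqrt, pf_sq_nonneg. Qed.

Lemma pf_inner_le u v : Rabs (Sum (fun i => u i * v i)) <= pf_norm u * pf_norm v.
Proof.
  apply Rabs_le_of_sq_le; [apply Rmult_le_pos; apply pf_norm_nonneg|].
  rewrite Rpow_mult_distr, !pf_norm_sq, Rmult_comm. apply pf_cauchy_schwarz.
Qed.

Lemma pf_norm_add_le u v : pf_norm (fun i => u i + v i) <= pf_norm u + pf_norm v.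
Proof.
  assert (Hu := pf_norm_nonneg u). assert (Hv := pf_norm_nonneg v).
  apply sq_le_sq_nonneg; [apply pf_norm_nonneg|lra|].
  assert (Huv := pf_inner_le u v). assert (Habs := Rle_abs (Sum (fun i => u i * v i))).
  replace ((pf_norm u + pf_norm v) ^ 2)
    with (pf_norm u ^ 2 + 2 * (pf_norm u * pf_norm v) + pf_norm v ^ 2) by ring.
  rewrite !pf_norm_sq.
  replace (Sum (fun i => (u i + v i) ^ 2)) with
    (Sum (fun i => u i ^ 2) + 2 * Sum (fun i => u i * v i) + Sum (fun i => v i ^ 2)); [lra|].
  rewrite <- Sum_scal, <- !Sum_add. f_equal; extensionality i; ring.
Qed.

Lemma pf_norm_scal c u : pf_norm (fun i => c * u i) = Rabs c * pf_norm u.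
Proof.
  unfold pf_norm.
  replace (Sum (fun i => (c * u i) ^ 2)) with (Rabs c ^ 2 * Sum (fun i => u i ^ 2)).
  - rewrite sqrt_mult_alt, sqrt_pow2 by (apply pow2_ge_0 || apply Rabs_pos). reflexivity.
  - rewrite pow2_abs, <- Sum_scal. f_equal; extensionality i; ring.
Qed.

End PositiveFunctional.

Lemma sumR_nonneg_all n f : (forall i, 0 <= f i) -> 0 <= sumR n f.
Proof. intros H; apply sumR_nonneg; auto. Qed.

Definition nrm (n : nat) (u : nat -> R) : R := pf_norm nat (sumR n) u.

Lemma nrm_nonneg n u : 0 <= nrm n u.
Proof. apply pf_norm_nonneg. Qed.

Lemma nrm_sq n u : nrm n u ^ 2 = sumR n (fun i => u i ^ 2).
Proof. apply pf_norm_sq, sumR_nonneg_all. Qed.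

Lemma sumR_mul_le_nrm n u v : Rabs (sumR n (fun i => u i * v i)) <= nrm n u * nrm n v.
Proof. apply pf_inner_le; [apply sumR_add|apply sumR_scal|apply sumR_nonneg_all]. Qed.

Lemma sumR_cauchy_schwarz n u v :
  sumR n (fun i => u i * v i) ^ 2 <= sumR n (fun i => u i ^ 2) * sumR n (fun i => v i ^ 2).
Proof.
  rewrite Rmult_comm.
  apply pf_cauchy_schwarz; [apply sumR_add|apply sumR_scal|apply sumR_nonneg_all].
Qed.

Lemma nrm_add_le n u v : nrm n (fun i => u i + v i) <= nrm n u + nrm n v.
Proof. apply pf_norm_add_le; [apply sumR_add|apply sumR_scal|apply sumR_nonneg_all]. Qed.

Lemma nrm_ext n u v : (forall i, (i < n)%nat -> u i = v i) -> nrm n u = nrm n v.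
Proof. intros H. unfold nrm, pf_norm. f_equal. apply sumR_ext; intros i Hi. rewrite H; auto. Qed.

Lemma nrm_zero n : nrm n (fun _ => 0) = 0.
Proof. unfold nrm, pf_norm. rewrite sumR_zero, sqrt_0 by (intros; ring). reflexivity. Qed.

Lemma Rabs_le_nrm n u i : (i < n)%nat -> Rabs (u i) <= nrm n u.
Proof.
  intros Hi. apply Rabs_le_of_sq_le; [apply nrm_nonneg|]. rewrite nrm_sq.
  apply (sumR_term_le n (fun j => u j ^ 2)); auto. intros; apply pow2_ge_0.
Qed.

Definition msum (n m : nat) (f : nat * nat -> R) : R :=
  sumR n (fun a => sumR m (fun b => f (a, b))).

Lemma msum_add n m f g : msum n m (fun p => f p + g p) = msum n m f + msum n m g.
Proof. unfold msum. rewrite <- sumR_add. apply sumR_ext; intros. apply sumR_add. Qed.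

Lemma msum_scal n m c f : msum n m (fun p => c * f p) = c * msum n m f.
Proof. unfold msum. rewrite <- sumR_scal. apply sumR_ext; intros. apply sumR_scal. Qed.

Lemma msum_nonneg n m f : (forall p, 0 <= f p) -> 0 <= msum n m f.
Proof. intros H. apply sumR_nonneg_all; intros; apply sumR_nonneg_all; auto. Qed.

Definition mnorm (n m : nat) (A : nat -> nat -> R) : R :=
  pf_norm (nat * nat) (msum n m) (fun p => A (fst p) (snd p)).

Lemma mnorm_nonneg n m A : 0 <= mnorm n m A.
Proof. apply pf_norm_nonneg. Qed.

Lemma mnorm_add_le n m A B :
  mnorm n m (fun a b => A a b + B a b) <= mnorm n m A + mnorm n m B.
Proof. apply pf_norm_add_le; [apply msum_add|apply msum_scal|apply msum_nonneg]. Qed.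

Lemma mnorm_scal n m c A : mnorm n m (fun a b => c * A a b) = Rabs c * mnorm n m A.
Proof. exact (pf_norm_scal _ _ (msum_scal n m) c _). Qed.

Lemma nrm_mulmx_le n m A u :
  nrm n (fun a => sumR m (fun b => A a b * u b)) <= mnorm n m A * nrm m u.
Proof.
  apply sq_le_sq_nonneg; [apply nrm_nonneg|apply Rmult_le_pos; [apply mnorm_nonneg|apply nrm_nonneg]|].
  rewrite Rpow_mult_distr, nrm_sq, nrm_sq. unfold mnorm. rewrite pf_norm_sq by apply msum_nonneg.
  unfold msum. simpl. rewrite <- sumR_mulr. apply sumR_le; intros a _.
  apply sumR_cauchy_schwarz.
Qed.

Definition line (W D : Params) (s : R) : Params := fun k i j => W k i j + s * D k i j.

Definition unit_param (k a b : nat) : Params := fun k' i j =>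
  if (Nat.eqb k' k && Nat.eqb i a && Nat.eqb j b)%bool then 1 else 0.

Lemma line_0 W D : line W D 0 = W.
Proof. extensionality k; extensionality i; extensionality j. unfold line; ring. Qed.

Lemma perturb_line W k a b s : perturb W k a b s = line W (unit_param k a b) s.
Proof.
  extensionality k'; extensionality i; extensionality j. unfold perturb, line, unit_param.
  destruct (Nat.eqb k' k && Nat.eqb i a && Nat.eqb j b)%bool; ring.
Qed.

Lemma frob_line_le d W D s k : 0 <= s -> frob d (line W D s) k <= frob d W k + s * frob d D k.
Proof.
  intros Hs.
  change (mnorm (d k) (d (k - 1)%nat) (fun a b => W k a b + s * D k a b)
          <= mnorm (d k) (d (k - 1)%nat) (W k) + s * mnorm (d k) (d (k - 1)%nat) (D k)).
  eapply Rle_trans; [apply mnorm_add_le|]. rewrite mnorm_scal, Rabs_pos_eq by lra. lra.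
Qed.

Lemma derivable_pt_lim_affine a b s : derivable_pt_lim (fun r => a + r * b) s b.
Proof.
  assert (H := derivable_pt_lim_plus (fun _ => a) (fun r => r * b) s _ _
    (derivable_pt_lim_const a s)
    (derivable_pt_lim_mult (fun r => r) (fun _ => b) s _ _
       (derivable_pt_lim_id s) (derivable_pt_lim_const b s))).
  cbv beta in H. replace (0 + (1 * b + s * 0)) with b in H by ring. exact H.
Qed.

Section Network.

Variable d : nat -> nat.

(* [fwd W v m = W_m ... W_1 v]; [dfwd] and [d2fwd] are its first and second derivatives
   at [s = 0] along the line [W + s D]. *)
Fixpoint fwd (W : Params) (v : nat -> R) (m : nat) : nat -> R :=
  match m with
  | O => v
  | S m' => fun i => sumR (d m') (fun l => W (S m') i l * fwd W v m' l)
  end.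

Fixpoint dfwd (W D : Params) (v : nat -> R) (m : nat) : nat -> R :=
  match m with
  | O => fun _ => 0
  | S m' => fun i =>
      sumR (d m') (fun l => D (S m') i l * fwd W v m' l + W (S m') i l * dfwd W D v m' l)
  end.

Fixpoint d2fwd (W D : Params) (v : nat -> R) (m : nat) : nat -> R :=
  match m with
  | O => fun _ => 0
  | S m' => fun i =>
      sumR (d m') (fun l => 2 * D (S m') i l * dfwd W D v m' l + W (S m') i l * d2fwd W D v m' l)
  end.

Lemma prodMat_fwd W v m i :
  (i < d m)%nat -> sumR (d 0%nat) (fun j => prodMat d W m i j * v j) = fwd W v m i.
Proof.
  revert i; induction m as [|m IH]; intros i Hi; simpl.
  - rewrite <- (sumR_delta (d 0%nat) i v Hi). apply sumR_ext; intros j _.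
    rewrite Nat.eqb_sym. reflexivity.
  - transitivity (sumR (d 0%nat) (fun j =>
      sumR (d m) (fun l => W (S m) i l * (prodMat d W m l j * v j)))).
    + apply sumR_ext; intros j _. rewrite <- sumR_mulr. apply sumR_ext; intros; ring.
    + rewrite sumR_exchange. apply sumR_ext; intros l Hl. rewrite sumR_scal, IH; auto.
Qed.

Lemma derivable_fwd_line W D v m i s :
  derivable_pt_lim (fun r => fwd (line W D r) v m i) s (dfwd (line W D s) D v m i).
Proof.
  revert i; induction m as [|m IH]; intros i; simpl.
  - apply derivable_pt_lim_const.
  - apply (derivable_pt_lim_sumR _ (fun l r => line W D r (S m) i l * fwd (line W D r) v m l)
      (fun l r => D (S m) i l * fwd (line W D r) v m l
                  + line W D r (S m) i l * dfwd (line W D r) D v m l)).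
    intros l _. apply (derivable_pt_lim_mult (fun r => line W D r (S m) i l)); [|apply IH].
    apply derivable_pt_lim_affine.
Qed.

Lemma derivable_dfwd_line W D v m i s :
  derivable_pt_lim (fun r => dfwd (line W D r) D v m i) s (d2fwd (line W D s) D v m i).
Proof.
  revert i; induction m as [|m IH]; intros i; simpl.
  - apply derivable_pt_lim_const.
  - apply (derivable_pt_lim_sumR _
      (fun l r => D (S m) i l * fwd (line W D r) v m l
                  + line W D r (S m) i l * dfwd (line W D r) D v m l)
      (fun l r => 2 * D (S m) i l * dfwd (line W D r) D v m l
                  + line W D r (S m) i l * d2fwd (line W D r) D v m l)).
    intros l _.
    set (Wl := line W D s).
    replace (2 * D (S m) i l * dfwd Wl D v m l + Wl (S m) i l * d2fwd Wl D v m l) with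
      ((0 * fwd Wl v m l + D (S m) i l * dfwd Wl D v m l)
       + (D (S m) i l * dfwd Wl D v m l + Wl (S m) i l * d2fwd Wl D v m l)) by ring.
    apply derivable_pt_lim_plus.
    + apply (derivable_pt_lim_mult (fun _ => D (S m) i l)); [apply derivable_pt_lim_const|].
      apply derivable_fwd_line.
    + apply (derivable_pt_lim_mult (fun r => line W D r (S m) i l)); [|apply IH].
      apply derivable_pt_lim_affine.
Qed.

(* Layer [k + 1] is summed at index [k], so that the layers [1 <= k <= m] are covered. *)
Definition coordSum (m : nat) (F : nat -> nat -> nat -> R) : R :=
  sumR m (fun k => sumR (d (S k)) (fun a => sumR (d k) (fun b => F (S k) a b))).

Lemma coordSum_ext m F F' :
  (forall k a b, (1 <= k <= m)%nat -> (a < d k)%nat -> (b < d (k - 1))%nat -> F k a b = F' k a b) ->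
  coordSum m F = coordSum m F'.
Proof.
  intros H. unfold coordSum.
  apply sumR_ext; intros k Hk; apply sumR_ext; intros a Ha; apply sumR_ext; intros b Hb.
  apply H; [lia|auto|]. simpl. rewrite Nat.sub_0_r. auto.
Qed.

Lemma coordSum_add m F F' :
  coordSum m (fun k a b => F k a b + F' k a b) = coordSum m F + coordSum m F'.
Proof.
  unfold coordSum. rewrite <- sumR_add. apply sumR_ext; intros.
  rewrite <- sumR_add. apply sumR_ext; intros. apply sumR_add.
Qed.

Lemma coordSum_scal m c F : coordSum m (fun k a b => c * F k a b) = c * coordSum m F.
Proof.
  unfold coordSum. rewrite <- sumR_scal. apply sumR_ext; intros.
  rewrite <- sumR_scal. apply sumR_ext; intros. apply sumR_scal.
Qed.

Lemma coordSum_nonneg m F : (forall k a b, 0 <= F k a b) -> 0 <= coordSum m F.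
Proof. intros H. repeat (apply sumR_nonneg_all; intros). auto. Qed.

Lemma coordSum_sumR m p F :
  coordSum m (fun k a b => sumR p (fun i => F k a b i))
  = sumR p (fun i => coordSum m (fun k a b => F k a b i)).
Proof.
  unfold coordSum. rewrite (sumR_exchange p m). apply sumR_ext; intros k _.
  rewrite (sumR_exchange p (d (S k))). apply sumR_ext; intros a _. apply sumR_exchange.
Qed.

Lemma coordSum_term_le m F k a b :
  (forall k a b, 0 <= F k a b) -> (1 <= k <= m)%nat -> (a < d k)%nat -> (b < d (k - 1))%nat ->
  F k a b <= coordSum m F.
Proof.
  intros HF Hk Ha Hb. destruct k as [|k]; [lia|]. simpl in Hb. rewrite Nat.sub_0_r in Hb.
  unfold coordSum.
  eapply Rle_trans;
    [|apply (sumR_term_le m _ k); [intros; repeat (apply sumR_nonneg_all; intros); auto|lia]].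
  eapply Rle_trans; [|apply (sumR_term_le _ _ a); [intros; apply sumR_nonneg_all; auto|auto]].
  apply (sumR_term_le _ (fun b => F (S k) a b) b); auto.
Qed.

Definition coordSum3 (m : nat) (f : nat * nat * nat -> R) : R :=
  coordSum m (fun k a b => f (k, a, b)).

Definition pnorm (m : nat) (D : Params) : R :=
  pf_norm (nat * nat * nat) (coordSum3 m) (fun p => D (fst (fst p)) (snd (fst p)) (snd p)).

Lemma coordSum3_add m f g : coordSum3 m (fun p => f p + g p) = coordSum3 m f + coordSum3 m g.
Proof. apply (coordSum_add m (fun k a b => f (k, a, b))). Qed.

Lemma coordSum3_scal m c f : coordSum3 m (fun p => c * f p) = c * coordSum3 m f.
Proof. apply (coordSum_scal m c (fun k a b => f (k, a, b))). Qed.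

Lemma coordSum3_nonneg m f : (forall p, 0 <= f p) -> 0 <= coordSum3 m f.
Proof. intros H. apply coordSum_nonneg; auto. Qed.

Lemma pnorm_nonneg m D : 0 <= pnorm m D.
Proof. apply pf_norm_nonneg. Qed.

Lemma pnorm_sq m D : pnorm m D ^ 2 = coordSum m (fun k a b => D k a b ^ 2).
Proof. apply (pf_norm_sq _ (coordSum3 m)), coordSum3_nonneg. Qed.

Lemma Rabs_coordSum_mul_le m D E :
  Rabs (coordSum m (fun k a b => D k a b * E k a b)) <= pnorm m D * pnorm m E.
Proof.
  exact (pf_inner_le _ _ (coordSum3_add m) (coordSum3_scal m) (coordSum3_nonneg m)
    (fun p => D (fst (fst p)) (snd (fst p)) (snd p)) (fun p => E (fst (fst p)) (snd (fst p)) (snd p))).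
Qed.

Lemma frob_le_pnorm m D k : (1 <= k <= m)%nat -> frob d D k <= pnorm m D.
Proof.
  intros Hk. unfold frob, pnorm, pf_norm, coordSum3. simpl. apply sqrt_le_1_alt.
  unfold coordSum. destruct k as [|k]; [lia|]. simpl. rewrite Nat.sub_0_r.
  apply (sumR_term_le m (fun k => sumR (d (S k)) (fun a => sumR (d k) (fun b => D (S k) a b ^ 2))));
    [|lia].
  intros; repeat (apply sumR_nonneg_all; intros); apply pow2_ge_0.
Qed.

Lemma Rabs_le_pnorm m D k a b :
  (1 <= k <= m)%nat -> (a < d k)%nat -> (b < d (k - 1))%nat -> Rabs (D k a b) <= pnorm m D.
Proof.
  intros Hk Ha Hb. apply Rabs_le_of_sq_le; [apply pnorm_nonneg|]. rewrite pnorm_sq.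
  apply (coordSum_term_le m (fun k a b => D k a b ^ 2)); auto. intros; apply pow2_ge_0.
Qed.

Lemma coordSum_S m F :
  coordSum (S m) F = coordSum m F + sumR (d (S m)) (fun a => sumR (d m) (fun b => F (S m) a b)).
Proof. reflexivity. Qed.

Lemma dfwd_zero W D v m i :
  (forall k a b, (1 <= k <= m)%nat -> D k a b = 0) -> dfwd W D v m i = 0.
Proof.
  revert i; induction m as [|m IH]; intros i H; simpl; [reflexivity|].
  apply sumR_zero; intros l _. rewrite H, IH by (intros; try apply H; lia). ring.
Qed.

Lemma unit_param_other k a b k' i j : k' <> k -> unit_param k a b k' i j = 0.
Proof. intros Hk. unfold unit_param. destruct (Nat.eqb_spec k' k); [lia|reflexivity]. Qed.

Lemma dfwd_unit_below W v m k a b r : (k <= m)%nat ->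
  dfwd W (unit_param k a b) v (S m) r =
  sumR (d m) (fun l => W (S m) r l * dfwd W (unit_param k a b) v m l).
Proof.
  intros Hk. simpl. apply sumR_ext; intros l _. rewrite unit_param_other by lia. ring.
Qed.

Lemma dfwd_unit_top W v m a b r : (b < d m)%nat ->
  dfwd W (unit_param (S m) a b) v (S m) r = if Nat.eqb r a then fwd W v m b else 0.
Proof.
  intros Hb. simpl.
  rewrite (sumR_ext _ _ (fun l => unit_param (S m) a b (S m) r l * fwd W v m l)).
  2:{ intros l _. rewrite dfwd_zero; [ring|]. intros; apply unit_param_other; lia. }
  rewrite (sumR_single _ b); auto.
  - unfold unit_param. rewrite !Nat.eqb_refl. destruct (Nat.eqb r a); simpl; ring.
  - intros l _ Hl. unfold unit_param. destruct (Nat.eqb_spec l b); [lia|].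
    rewrite Bool.andb_false_r. ring.
Qed.

Lemma dfwd_coord W D v m r : (r < d m)%nat ->
  dfwd W D v m r = coordSum m (fun k a b => D k a b * dfwd W (unit_param k a b) v m r).
Proof.
  revert r; induction m as [|m IH]; intros r Hr; [reflexivity|].
  rewrite coordSum_S.
  transitivity (sumR (d m) (fun l => W (S m) r l * dfwd W D v m l)
                + sumR (d m) (fun l => D (S m) r l * fwd W v m l)).
  { simpl. rewrite <- sumR_add. apply sumR_ext; intros; ring. }
  f_equal.
  - transitivity (sumR (d m) (fun l =>
      coordSum m (fun k a b => W (S m) r l * (D k a b * dfwd W (unit_param k a b) v m l)))).
    { apply sumR_ext; intros l Hl. rewrite IH, coordSum_scal; auto. }
    rewrite <- coordSum_sumR. apply coordSum_ext; intros k a b Hk _ _.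
    rewrite dfwd_unit_below, <- sumR_scal by lia. apply sumR_ext; intros; ring.
  - rewrite (sumR_single (d (S m)) r); auto.
    + apply sumR_ext; intros b Hb. rewrite dfwd_unit_top, Nat.eqb_refl; auto.
    + intros a _ Ha. apply sumR_zero; intros b Hb. rewrite dfwd_unit_top by auto.
      destruct (Nat.eqb_spec r a); [lia|ring].
Qed.

Lemma frob_S W m : frob d W (S m) = mnorm (d (S m)) (d m) (W (S m)).
Proof. unfold frob, mnorm, pf_norm, msum. simpl. rewrite Nat.sub_0_r. reflexivity. Qed.

Lemma nrm_mulmx_add_le n m A B u w :
  nrm n (fun i => sumR m (fun l => A i l * u l + B i l * w l))
  <= mnorm n m A * nrm m u + mnorm n m B * nrm m w.
Proof.
  rewrite (nrm_ext n _ (fun i => sumR m (fun l => A i l * u l) + sumR m (fun l => B i l * w l)))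
    by (intros; apply sumR_add).
  eapply Rle_trans; [apply nrm_add_le|]. apply Rplus_le_compat; apply nrm_mulmx_le.
Qed.

Section ForwardBounds.

Variables (W D : Params) (v : nat -> R) (Rw del : R) (Lm : nat).
Hypothesis Rw_ge1 : 1 <= Rw.
Hypothesis del_ge0 : 0 <= del.
Hypothesis frob_W_le : forall k, (1 <= k <= Lm)%nat -> frob d W k <= Rw.
Hypothesis frob_D_le : forall k, (1 <= k <= Lm)%nat -> frob d D k <= del.

Let mnorm_W_le m : (m < Lm)%nat -> mnorm (d (S m)) (d m) (W (S m)) <= Rw.
Proof. intros Hm. rewrite <- frob_S. apply frob_W_le; lia. Qed.

Let mnorm_D_le m : (m < Lm)%nat -> mnorm (d (S m)) (d m) (D (S m)) <= del.
Proof. intros Hm. rewrite <- frob_S. apply frob_D_le; lia. Qed.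

Lemma nrm_fwd_le m : (m <= Lm)%nat -> nrm (d m) (fwd W v m) <= Rw ^ m * nrm (d 0%nat) v.
Proof.
  induction m as [|m IH]; intros Hm; simpl; [lra|].
  assert (IHm := IH ltac:(lia)). assert (HW := mnorm_W_le m ltac:(lia)).
  assert (0 <= mnorm (d (S m)) (d m) (W (S m))) by apply mnorm_nonneg.
  assert (0 <= nrm (d m) (fwd W v m)) by apply nrm_nonneg.
  eapply Rle_trans; [apply nrm_mulmx_le|]. nra.
Qed.

Lemma nrm_dfwd_le m : (m <= Lm)%nat ->
  Rw * nrm (d m) (dfwd W D v m) <= INR m * Rw ^ m * del * nrm (d 0%nat) v.
Proof.
  induction m as [|m IH]; intros Hm.
  - simpl. rewrite nrm_zero. lra.
  - assert (IHm := IH ltac:(lia)). assert (Hf := nrm_fwd_le m ltac:(lia)).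
    assert (HW := mnorm_W_le m ltac:(lia)). assert (HD := mnorm_D_le m ltac:(lia)).
    assert (0 <= mnorm (d (S m)) (d m) (D (S m))) by apply mnorm_nonneg.
    assert (0 <= nrm (d m) (fwd W v m)) by apply nrm_nonneg.
    assert (0 <= nrm (d m) (dfwd W D v m)) by apply nrm_nonneg.
    assert (Hsum := nrm_mulmx_add_le (d (S m)) (d m) (D (S m)) (W (S m)) (fwd W v m) (dfwd W D v m)).
    assert (mnorm (d (S m)) (d m) (D (S m)) * nrm (d m) (fwd W v m) <= del * (Rw ^ m * nrm (d 0%nat) v))
      by (apply Rmult_le_compat; auto).
    assert (Rw * (mnorm (d (S m)) (d m) (W (S m)) * nrm (d m) (dfwd W D v m))
            <= Rw * (INR m * Rw ^ m * del * nrm (d 0%nat) v)).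
    { replace (Rw * (mnorm (d (S m)) (d m) (W (S m)) * nrm (d m) (dfwd W D v m)))
        with (mnorm (d (S m)) (d m) (W (S m)) * (Rw * nrm (d m) (dfwd W D v m))) by ring.
      apply Rmult_le_compat; auto; [apply mnorm_nonneg|nra]. }
    eapply Rle_trans; [apply Rmult_le_compat_l; [lra|apply Hsum]|].
    rewrite S_INR; change (Rw ^ S m) with (Rw * Rw ^ m). nra.
Qed.

Lemma nrm_d2fwd_le m : (m <= Lm)%nat ->
  Rw ^ 2 * nrm (d m) (d2fwd W D v m) <= INR m ^ 2 * Rw ^ m * del ^ 2 * nrm (d 0%nat) v.
Proof.
  induction m as [|m IH]; intros Hm.
  - simpl. rewrite nrm_zero. lra.
  - assert (IHm := IH ltac:(lia)). assert (Hd := nrm_dfwd_le m ltac:(lia)).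
    assert (HW := mnorm_W_le m ltac:(lia)). assert (HD := mnorm_D_le m ltac:(lia)).
    assert (0 <= mnorm (d (S m)) (d m) (W (S m))) by apply mnorm_nonneg.
    assert (0 <= nrm (d m) (dfwd W D v m)) by apply nrm_nonneg.
    assert (0 <= nrm (d m) (d2fwd W D v m)) by apply nrm_nonneg.
    assert (0 <= INR m) by apply pos_INR.
    assert (0 <= nrm (d 0%nat) v) by apply nrm_nonneg.
    assert (0 <= Rw ^ m) by (apply pow_le; lra).
    assert (Hsum := nrm_mulmx_add_le (d (S m)) (d m) (fun i l => 2 * D (S m) i l) (W (S m))
                      (dfwd W D v m) (d2fwd W D v m)).
    rewrite mnorm_scal, Rabs_pos_eq in Hsum by lra.
    assert (2 * mnorm (d (S m)) (d m) (D (S m)) * (Rw * nrm (d m) (dfwd W D v m))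
            <= 2 * del * (INR m * Rw ^ m * del * nrm (d 0%nat) v)).
    { apply Rmult_le_compat; [apply Rmult_le_pos; [lra|apply mnorm_nonneg]|nra|lra|auto]. }
    assert (mnorm (d (S m)) (d m) (W (S m)) * (Rw ^ 2 * nrm (d m) (d2fwd W D v m))
            <= Rw * (INR m ^ 2 * Rw ^ m * del ^ 2 * nrm (d 0%nat) v))
      by (apply Rmult_le_compat; auto; nra).
    eapply Rle_trans; [apply Rmult_le_compat_l; [nra|apply Hsum]|].
    set (K := Rw ^ m * del ^ 2 * nrm (d 0%nat) v).
    assert (0 <= K) by (apply Rmult_le_pos; [apply Rmult_le_pos; [auto|apply pow2_ge_0]|auto]).
    apply Rle_trans with (Rw * (2 * INR m + INR m ^ 2) * K).
    { replace (Rw * (2 * INR m + INR m ^ 2) * K) with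
        (Rw * (2 * del * (INR m * Rw ^ m * del * nrm (d 0%nat) v))
         + Rw * (INR m ^ 2 * Rw ^ m * del ^ 2 * nrm (d 0%nat) v)) by (unfold K; ring).
      nra. }
    apply Rle_trans with (Rw * (INR m + 1) ^ 2 * K).
    + apply Rmult_le_compat_r; [auto|]. apply Rmult_le_compat_l; nra.
    + rewrite S_INR; change (Rw ^ S m) with (Rw * Rw ^ m). unfold K. right; ring.
Qed.

End ForwardBounds.

Definition first_layer_dir (W : Params) (u w : nat -> R) : Params := fun k a b =>
  if Nat.eqb k 1 then fwd W w 1 a * u b else 0.

Lemma dfwd_first_layer_dir W u w v m a : (1 <= m)%nat ->
  dfwd W (first_layer_dir W u w) v m a = inner (d 0%nat) u v * fwd W w m a.
Proof.
  revert a; induction m as [|m IH]; intros a Hm; [lia|]. destruct m as [|m].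
  - simpl. unfold first_layer_dir, inner. simpl. rewrite <- sumR_mulr.
    apply sumR_ext; intros; ring.
  - change (sumR (d (S m)) (fun l => first_layer_dir W u w (S (S m)) a l * fwd W v (S m) l
                                   + W (S (S m)) a l * dfwd W (first_layer_dir W u w) v (S m) l)
            = inner (d 0%nat) u v * sumR (d (S m)) (fun l => W (S (S m)) a l * fwd W w (S m) l)).
    rewrite <- sumR_scal. apply sumR_ext; intros l _. rewrite IH by lia.
    unfold first_layer_dir. simpl. ring.
Qed.

Lemma pnorm_first_layer_dir m W u w : (1 <= m)%nat ->
  pnorm m (first_layer_dir W u w) = nrm (d 1%nat) (fwd W w 1) * nrm (d 0%nat) u.
Proof.
  intros Hm. unfold pnorm, pf_norm, coordSum3. cbn [fst snd].
  rewrite <- (sqrt_pow2 (nrm (d 1%nat) (fwd W w 1) * nrm (d 0%nat) u))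
    by (apply Rmult_le_pos; apply nrm_nonneg).
  f_equal. rewrite Rpow_mult_distr, !nrm_sq. unfold coordSum.
  rewrite (sumR_single m 0); [|lia|].
  - rewrite <- sumR_mulr. apply sumR_ext; intros a _. rewrite <- sumR_scal.
    apply sumR_ext; intros b _. unfold first_layer_dir. simpl. ring.
  - intros k _ Hk. apply sumR_zero; intros a _; apply sumR_zero; intros b _.
    unfold first_layer_dir. destruct (Nat.eqb_spec (S k) 1); [lia|ring].
Qed.

End Network.

Lemma frob_le_maxFrob d W m k : (1 <= k <= m)%nat -> frob d W k <= maxFrob d W m.
Proof.
  induction m as [|m IH]; intros Hk; [lia|]. destruct m as [|m].
  - replace k with 1%nat by lia. simpl. lra.
  - change (frob d W k <= Rmax (maxFrob d W (S m)) (frob d W (S (S m)))).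
    destruct (Nat.eq_dec k (S (S m))) as [->|Hne]; [apply Rmax_r|].
    eapply Rle_trans; [apply IH; lia|apply Rmax_l].
Qed.

Lemma maxFrob_le d W m X : (1 <= m)%nat ->
  (forall k, (1 <= k <= m)%nat -> frob d W k <= X) -> maxFrob d W m <= X.
Proof.
  induction m as [|m IH]; intros Hm H; [lia|]. destruct m as [|m]; [apply H; lia|].
  change (Rmax (maxFrob d W (S m)) (frob d W (S (S m))) <= X).
  apply Rmax_lub; [apply IH; [lia|intros; apply H; lia]|apply H; lia].
Qed.

Lemma maxFrob_nonneg d W m : (1 <= m)%nat -> 0 <= maxFrob d W m.
Proof.
  intros Hm. eapply Rle_trans; [apply (sqrt_pos _ : 0 <= frob d W 1)|apply frob_le_maxFrob; lia].
Qed.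

Lemma betaR_le L beta Gb R1 R2 : 0 <= beta + Gb -> 1 <= R1 <= R2 ->
  betaR L beta Gb R1 <= betaR L beta Gb R2.
Proof.
  intros Hb HR. unfold betaR. apply Rmult_le_compat_r; [auto|].
  apply Rmult_le_compat_l; [apply Rmult_le_pos; [lra|apply pow2_ge_0]|].
  apply pow_incr; lra.
Qed.

Lemma betaR_mul_sq L beta Gb Rw :
  (1 <= L)%nat -> betaR L beta Gb Rw * Rw ^ 2 = 2 * INR L ^ 2 * Rw ^ (2 * L) * (beta + Gb).
Proof.
  intros HL. unfold betaR. replace (2 * L)%nat with ((2 * L - 2) + 2)%nat at 2 by lia.
  rewrite pow_add. ring.
Qed.

Section Training.

Variables (n : nat) (d : nat -> nat) (L : nat) (x : nat -> nat -> R) (y : nat -> R).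
Hypothesis Hy : forall i, (i < n)%nat -> y i = 1 \/ y i = -1.
Hypothesis Hx : forall i, (i < n)%nat -> sqrt (sumR (d 0%nat) (fun j => (x i j) ^ 2)) <= 1.
Hypothesis Hsep : exists u : nat -> R,
  forall i, (i < n)%nat -> 0 < inner (d 0%nat) u (fun j => y i * x i j).
Hypothesis HL : (1 <= L)%nat.
Hypothesis HdL : d L = 1%nat.
Variables (l l' : R -> R) (beta Gb : R).
Hypothesis Hl_der : forall s, derivable_pt_lim l s (l' s).
Hypothesis Hl'_cont : continuity l'.
Hypothesis Hl'_neg : forall s, l' s < 0.
Hypothesis Hl_pinf : forall eps, 0 < eps -> exists A, forall s, A <= s -> Rabs (l s) < eps.
Hypothesis Hlip : forall s r, Rabs (l' s - l' r) <= beta * Rabs (s - r).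
Hypothesis Hbnd : forall s, Rabs (l' s) <= Gb.
Variable G : Params -> Params.
Hypothesis HG : is_gradient d L (risk l n (fun i j => y i * x i j) d L) G.

Let z (i : nat) : nat -> R := fun j => y i * x i j.

Let output (W : Params) (i : nat) : R := fwd d W (z i) L 0%nat.

Let dirDeriv (W D : Params) : R := mean n (fun i => l' (output W i) * dfwd d W D (z i) L 0%nat).

Let gnorm (W : Params) : R := pnorm d L (G W).

Lemma z_nrm_le i : (i < n)%nat -> nrm (d 0%nat) (z i) <= 1.
Proof.
  intros Hi. eapply Rle_trans; [|apply (Hx i Hi)]. right. unfold nrm, pf_norm, z. f_equal.
  apply sumR_ext; intros j _. destruct (Hy i Hi) as [-> | ->]; ring.
Qed.

Lemma risk_mean W : risk l n z d L W = mean n (fun i => l (output W i)).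
Proof.
  unfold risk, mean, inner, wprod, output. f_equal. apply sumR_ext; intros i _.
  rewrite prodMat_fwd by (rewrite HdL; lia). reflexivity.
Qed.

Lemma derivable_risk_line W D s :
  derivable_pt_lim (fun r => risk l n z d L (line W D r)) s (dirDeriv (line W D s) D).
Proof.
  assert (H := derivable_pt_lim_scal _ (/ INR n) s _
    (derivable_pt_lim_sumR n (fun i r => l (output (line W D r) i))
       (fun i r => l' (output (line W D r) i) * dfwd d (line W D r) D (z i) L 0%nat) s
       (fun i _ => derivable_pt_lim_comp _ l s _ _ (derivable_fwd_line d W D (z i) L 0 s) (Hl_der _)))).
  replace (fun r => risk l n z d L (line W D r))
    with (fun r => / INR n * sumR n (fun i => l (output (line W D r) i)))
    by (extensionality r; rewrite risk_mean; reflexivity).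
  exact H.
Qed.

Lemma G_coord W k a b : (1 <= k <= L)%nat -> (a < d k)%nat -> (b < d (k - 1))%nat ->
  G W k a b = dirDeriv W (unit_param k a b).
Proof.
  intros Hk Ha Hb. apply (uniqueness_limite _ 0 _ _ (HG W k a b Hk Ha Hb)).
  assert (H := derivable_risk_line W (unit_param k a b) 0). rewrite line_0 in H.
  replace (fun s => risk l n (fun i j => y i * x i j) d L (perturb W k a b s))
    with (fun s => risk l n z d L (line W (unit_param k a b) s))
    by (extensionality s; rewrite perturb_line; reflexivity).
  exact H.
Qed.

Lemma dirDeriv_coord W D : dirDeriv W D = coordSum d L (fun k a b => D k a b * G W k a b).
Proof.
  transitivity (/ INR n * sumR n (fun i => coordSum d L (fun k a b =>
    l' (output W i) * (D k a b * dfwd d W (unit_param k a b) (z i) L 0%nat)))).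
  { unfold dirDeriv, mean. f_equal. apply sumR_ext; intros i _.
    rewrite coordSum_scal, <- dfwd_coord by (rewrite HdL; lia). reflexivity. }
  rewrite <- coordSum_sumR, <- coordSum_scal. apply coordSum_ext; intros k a b Hk Ha Hb.
  rewrite G_coord by auto. unfold dirDeriv, mean. rewrite <- !sumR_scal.
  apply sumR_ext; intros; ring.
Qed.

Lemma beta_nonneg : 0 <= beta.
Proof.
  assert (H := Hlip 1 0). assert (0 <= Rabs (l' 1 - l' 0)) by apply Rabs_pos.
  rewrite Rminus_0_r, Rabs_R1 in H. lra.
Qed.

Lemma Gb_pos : 0 < Gb.
Proof. assert (H := Hbnd 0). assert (H0 := Hl'_neg 0). rewrite Rabs_left in H; lra. Qed.

Lemma gnorm_sq W : gnorm W ^ 2 = dirDeriv W (G W).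
Proof. unfold gnorm. rewrite pnorm_sq, dirDeriv_coord. apply coordSum_ext; intros; ring. Qed.

Lemma Rabs_top_le u : Rabs (u 0%nat) <= nrm (d L) u.
Proof. apply Rabs_le_nrm. rewrite HdL; lia. Qed.

Section TopBounds.

Variables (W D : Params) (Rw del : R).
Hypothesis Rw_ge1 : 1 <= Rw.
Hypothesis del_ge0 : 0 <= del.
Hypothesis frob_W_le : forall k, (1 <= k <= L)%nat -> frob d W k <= Rw.
Hypothesis frob_D_le : forall k, (1 <= k <= L)%nat -> frob d D k <= del.

Lemma Rabs_output_le i : (i < n)%nat -> Rabs (output W i) <= Rw ^ L.
Proof.
  intros Hi. eapply Rle_trans; [apply Rabs_top_le|].
  eapply Rle_trans; [apply (nrm_fwd_le d W (z i) Rw L); auto|].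
  assert (0 <= Rw ^ L) by (apply pow_le; lra). assert (Hz := z_nrm_le i Hi).
  rewrite <- (Rmult_1_r (Rw ^ L)) at 2. apply Rmult_le_compat_l; auto.
Qed.

Lemma Rabs_dfwd_le i : (i < n)%nat ->
  Rw * Rabs (dfwd d W D (z i) L 0%nat) <= INR L * Rw ^ L * del.
Proof.
  intros Hi. eapply Rle_trans; [apply Rmult_le_compat_l; [lra|apply Rabs_top_le]|].
  eapply Rle_trans; [apply (nrm_dfwd_le d W D (z i) Rw del L); auto|].
  assert (0 <= INR L * Rw ^ L * del)
    by (apply Rmult_le_pos; [apply Rmult_le_pos; [apply pos_INR|apply pow_le; lra]|auto]).
  assert (Hz := z_nrm_le i Hi).
  rewrite <- (Rmult_1_r (INR L * Rw ^ L * del)) at 2. apply Rmult_le_compat_l; auto.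
Qed.

Lemma Rabs_d2fwd_le i : (i < n)%nat ->
  Rw ^ 2 * Rabs (d2fwd d W D (z i) L 0%nat) <= INR L ^ 2 * Rw ^ L * del ^ 2.
Proof.
  intros Hi. eapply Rle_trans; [apply Rmult_le_compat_l; [nra|apply Rabs_top_le]|].
  eapply Rle_trans; [apply (nrm_d2fwd_le d W D (z i) Rw del L); auto|].
  assert (0 <= INR L ^ 2 * Rw ^ L * del ^ 2)
    by (apply Rmult_le_pos; [apply Rmult_le_pos; [apply pow2_ge_0|apply pow_le; lra]|apply pow2_ge_0]).
  assert (Hz := z_nrm_le i Hi).
  rewrite <- (Rmult_1_r (INR L ^ 2 * Rw ^ L * del ^ 2)) at 2. apply Rmult_le_compat_l; auto.
Qed.

Lemma Rabs_dirDeriv_le : Rw * Rabs (dirDeriv W D) <= Gb * INR L * Rw ^ L * del.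
Proof.
  assert (HGb := Gb_pos).
  replace (Rw * Rabs (dirDeriv W D))
    with (Rabs (mean n (fun i => l' (output W i) * (Rw * dfwd d W D (z i) L 0%nat)))).
  - apply mean_abs_le.
    + apply Rmult_le_pos; [|auto]. apply Rmult_le_pos; [|apply pow_le; lra].
      apply Rmult_le_pos; [lra|apply pos_INR].
    + intros i Hi. rewrite Rabs_mult, Rabs_mult, (Rabs_pos_eq Rw) by lra.
      rewrite !Rmult_assoc. apply Rmult_le_compat; [apply Rabs_pos| |apply Hbnd|].
      * apply Rmult_le_pos; [lra|apply Rabs_pos].
      * rewrite <- !Rmult_assoc. apply Rabs_dfwd_le; auto.
  - replace (mean n (fun i => l' (output W i) * (Rw * dfwd d W D (z i) L 0%nat)))
      with (Rw * dirDeriv W D).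
    + rewrite Rabs_mult, Rabs_pos_eq by lra. reflexivity.
    + unfold dirDeriv, mean. rewrite <- !sumR_scal. apply sumR_ext; intros; ring.
Qed.

End TopBounds.

Lemma gnorm_mul_le W Rw : 1 <= Rw -> (forall k, (1 <= k <= L)%nat -> frob d W k <= Rw) ->
  gnorm W * Rw <= Gb * INR L * Rw ^ L.
Proof.
  intros HRw HW. assert (Hg := pnorm_nonneg d L (G W)). fold (gnorm W) in Hg.
  assert (HGb := Gb_pos). assert (0 <= Rw ^ L) by (apply pow_le; lra).
  assert (0 <= INR L) by apply pos_INR.
  assert (Hd := Rabs_dirDeriv_le W (G W) Rw (gnorm W) HRw Hg HW (frob_le_pnorm d L (G W))).
  rewrite <- gnorm_sq, Rabs_pos_eq in Hd by apply pow2_ge_0.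
  destruct (Req_dec (gnorm W) 0) as [->|Hne].
  - rewrite Rmult_0_l. repeat apply Rmult_le_pos; lra.
  - apply Rmult_le_reg_l with (gnorm W); [lra|]. nra.
Qed.

Lemma gnorm_le_betaR W Rw : 1 <= Rw -> (forall k, (1 <= k <= L)%nat -> frob d W k <= Rw) ->
  gnorm W <= betaR L beta Gb Rw.
Proof.
  intros HRw HW. assert (H := gnorm_mul_le W Rw HRw HW).
  assert (HB := betaR_mul_sq L beta Gb Rw HL).
  assert (Hb := beta_nonneg). assert (HGb := Gb_pos).
  assert (HL1 : 1 <= INR L) by (apply (le_INR 1); auto).
  assert (HRL : Rw ^ S L <= Rw ^ (2 * L)) by (apply Rle_pow; auto; lia).
  assert (0 <= Rw ^ S L) by (apply pow_le; lra).
  apply Rmult_le_reg_r with (Rw ^ 2); [nra|]. rewrite HB.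
  apply Rle_trans with (Gb * INR L * Rw ^ S L).
  { replace (gnorm W * Rw ^ 2) with ((gnorm W * Rw) * Rw) by ring. simpl (Rw ^ S L).
    replace (Gb * INR L * (Rw * Rw ^ L)) with (Gb * INR L * Rw ^ L * Rw) by ring.
    apply Rmult_le_compat_r; lra. }
  replace (2 * INR L ^ 2 * Rw ^ (2 * L) * (beta + Gb))
    with ((2 * INR L ^ 2 * (beta + Gb)) * Rw ^ (2 * L)) by ring.
  apply Rmult_le_compat; [nra|lra| |lra].
  assert (INR L <= INR L ^ 2) by nra. assert (0 <= INR L ^ 2 * beta) by nra. nra.
Qed.

Lemma betaR_pos Rw : 1 <= Rw -> 0 < betaR L beta Gb Rw.
Proof.
  intros HRw. assert (H := betaR_mul_sq L beta Gb Rw HL). assert (Hb := beta_nonneg).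
  assert (HGb := Gb_pos). assert (HL1 : 1 <= INR L) by (apply (le_INR 1); auto).
  assert (1 <= Rw ^ (2 * L)) by (apply pow_R1_Rle; auto).
  assert (0 < 2 * INR L ^ 2 * Rw ^ (2 * L) * (beta + Gb)) by (repeat apply Rmult_lt_0_compat; nra).
  nra.
Qed.

Lemma l'_product_variation_le a0 a1 p0 p1 :
  Rabs (l' a1 * p1 - l' a0 * p0) <= beta * Rabs (a1 - a0) * Rabs p1 + Gb * Rabs (p1 - p0).
Proof.
  replace (l' a1 * p1 - l' a0 * p0) with ((l' a1 - l' a0) * p1 + l' a0 * (p1 - p0)) by ring.
  eapply Rle_trans; [apply Rabs_triang|]. rewrite !Rabs_mult.
  apply Rplus_le_compat; apply Rmult_le_compat_r; auto using Rabs_pos.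
Qed.

(* The constant [betaR] is exactly what makes the second-order term of a step of length [c]
   at most [c g^2 betaR / 2]. *)
Lemma second_order_term_le a0 a1 p0 p1 c Rw g :
  0 < c -> 1 <= Rw -> 0 <= g ->
  Rw * Rabs (a1 - a0) <= c * (INR L * Rw ^ L * g) ->
  Rw * Rabs p1 <= INR L * Rw ^ L * g ->
  Rw ^ 2 * Rabs (p1 - p0) <= c * (INR L ^ 2 * Rw ^ L * g ^ 2) ->
  Rabs (l' a1 * p1 - l' a0 * p0) <= c * g ^ 2 * betaR L beta Gb Rw / 2.
Proof.
  intros Hc HRw Hg Ha Hp Hq.
  assert (Hb := beta_nonneg). assert (HGb := Gb_pos). assert (HR2 : 0 < Rw ^ 2) by nra.
  assert (HRL : Rw ^ L <= Rw ^ (2 * L)) by (apply Rle_pow; auto; lia).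
  assert (0 <= Rw ^ L) by (apply pow_le; lra). assert (0 <= INR L) by apply pos_INR.
  assert (0 <= INR L * Rw ^ L * g) by (apply Rmult_le_pos; [apply Rmult_le_pos|]; lra).
  eapply Rle_trans; [apply l'_product_variation_le|].
  apply Rmult_le_reg_l with (Rw ^ 2); auto.
  replace (Rw ^ 2 * (c * g ^ 2 * betaR L beta Gb Rw / 2))
    with (c * g ^ 2 * (betaR L beta Gb Rw * Rw ^ 2) / 2) by field.
  rewrite betaR_mul_sq by auto.
  replace (Rw ^ 2 * (beta * Rabs (a1 - a0) * Rabs p1 + Gb * Rabs (p1 - p0)))
    with (beta * ((Rw * Rabs (a1 - a0)) * (Rw * Rabs p1)) + Gb * (Rw ^ 2 * Rabs (p1 - p0))) by ring.
  apply Rle_trans with (beta * ((c * (INR L * Rw ^ L * g)) * (INR L * Rw ^ L * g))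
                        + Gb * (c * (INR L ^ 2 * Rw ^ L * g ^ 2))).
  { apply Rplus_le_compat; apply Rmult_le_compat_l; try lra.
    apply Rmult_le_compat; auto; apply Rmult_le_pos; auto using Rabs_pos; lra. }
  replace (Rw ^ (2 * L)) with (Rw ^ L * Rw ^ L) by (rewrite <- pow_add; f_equal; lia).
  assert (0 <= c * g ^ 2 * INR L ^ 2) by (apply Rmult_le_pos; [apply Rmult_le_pos|]; nra).
  assert (Rw ^ L <= Rw ^ L * Rw ^ L) by (rewrite <- pow_add; apply Rle_pow; auto; lia).
  replace (beta * (c * (INR L * Rw ^ L * g) * (INR L * Rw ^ L * g))
           + Gb * (c * (INR L ^ 2 * Rw ^ L * g ^ 2)))
    with (c * g ^ 2 * INR L ^ 2 * (beta * (Rw ^ L * Rw ^ L) + Gb * Rw ^ L)) by ring.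
  replace (c * g ^ 2 * (2 * INR L ^ 2 * (Rw ^ L * Rw ^ L) * (beta + Gb)) / 2)
    with (c * g ^ 2 * INR L ^ 2 * (beta * (Rw ^ L * Rw ^ L) + Gb * (Rw ^ L * Rw ^ L))) by field.
  apply Rmult_le_compat_l; [auto|]. apply Rplus_le_compat_l, Rmult_le_compat_l; lra.
Qed.

Section Descent.

Variables (W : Params) (Rw eta : R).
Hypothesis Rw_ge1 : 1 <= Rw.
Hypothesis frob_W_le : forall k, (1 <= k <= L)%nat -> frob d W k <= Rw - 1.
Hypothesis eta_pos : 0 < eta.
Hypothesis eta_le : eta <= 1 / betaR L beta Gb Rw.

Let D : Params := fun k a b => - G W k a b.

(* [phi' s] is the derivative of [s |-> R(W - s grad R(W))]. *)
Let phi' (s : R) : R := dirDeriv (line W D s) D.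

Lemma frob_neg_grad_le k : (1 <= k <= L)%nat -> frob d D k <= gnorm W.
Proof.
  intros Hk. eapply Rle_trans; [|apply (frob_le_pnorm d L (G W) k Hk)].
  right. unfold frob, D. f_equal. apply sumR_ext; intros; apply sumR_ext; intros; ring.
Qed.

Lemma eta_mul_betaR_le : eta * betaR L beta Gb Rw <= 1.
Proof.
  assert (H := betaR_pos Rw Rw_ge1).
  apply Rle_trans with (1 / betaR L beta Gb Rw * betaR L beta Gb Rw);
    [apply Rmult_le_compat_r; lra|right; field; lra].
Qed.

Lemma frob_segment_le s k : 0 <= s <= eta -> (1 <= k <= L)%nat -> frob d (line W D s) k <= Rw.
Proof.
  intros Hs Hk.
  assert (Hg : gnorm W <= betaR L beta Gb Rw)
    by (apply gnorm_le_betaR; auto; intros j Hj; generalize (frob_W_le j Hj); lra).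
  assert (Hgn := pnorm_nonneg d L (G W)). assert (HD := frob_neg_grad_le k Hk).
  assert (H := eta_mul_betaR_le). assert (HW := frob_W_le k Hk).
  assert (0 <= frob d D k) by apply sqrt_pos.
  eapply Rle_trans; [apply frob_line_le; lra|]. nra.
Qed.

Lemma phi'_0 : phi' 0 = - gnorm W ^ 2.
Proof.
  unfold phi'. rewrite line_0, dirDeriv_coord. unfold gnorm. rewrite pnorm_sq.
  transitivity (coordSum d L (fun k a b => -1 * G W k a b ^ 2)).
  - apply coordSum_ext; intros; unfold D; ring.
  - rewrite coordSum_scal; ring.
Qed.

Lemma phi'_variation_le c : 0 < c <= eta ->
  Rabs (phi' c - phi' 0) <= c * gnorm W ^ 2 * betaR L beta Gb Rw / 2.
Proof.
  intros Hc. assert (Hg := pnorm_nonneg d L (G W)).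
  assert (HbR := betaR_pos Rw Rw_ge1).
  assert (Hseg : forall s, 0 <= s <= c ->
                  forall k, (1 <= k <= L)%nat -> frob d (line W D s) k <= Rw)
    by (intros; apply frob_segment_le; auto; lra).
  unfold phi', dirDeriv, mean. rewrite <- Rmult_minus_distr_l, <- sumR_sub. apply mean_abs_le.
  { apply Rmult_le_pos; [|lra]. apply Rmult_le_pos; [|lra]. apply Rmult_le_pos; [lra|apply pow2_ge_0]. }
  intros i Hi.
  destruct (MVT_cor2 (fun s => output (line W D s) i)
                     (fun s => dfwd d (line W D s) D (z i) L 0%nat) 0 c)
    as [c1 [E1 Hc1]]; [lra|intros; apply derivable_fwd_line|].
  destruct (MVT_cor2 (fun s => dfwd d (line W D s) D (z i) L 0%nat)
                     (fun s => d2fwd d (line W D s) D (z i) L 0%nat) 0 c)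
    as [c2 [E2 Hc2]]; [lra|intros; apply derivable_dfwd_line|].
  simpl in E1, E2. rewrite Rminus_0_r in E1, E2.
  apply second_order_term_le with (Rw := Rw); [lra|auto|auto| | |].
  - rewrite E1, Rabs_mult, (Rabs_pos_eq c) by lra.
    replace (Rw * (Rabs (dfwd d (line W D c1) D (z i) L 0) * c))
      with (c * (Rw * Rabs (dfwd d (line W D c1) D (z i) L 0))) by ring.
    apply Rmult_le_compat_l; [lra|].
    apply Rabs_dfwd_le; auto; [apply Hseg; lra|apply frob_neg_grad_le].
  - apply Rabs_dfwd_le; auto; [apply Hseg; lra|apply frob_neg_grad_le].
  - rewrite E2, Rabs_mult, (Rabs_pos_eq c) by lra.
    replace (Rw ^ 2 * (Rabs (d2fwd d (line W D c2) D (z i) L 0) * c))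
      with (c * (Rw ^ 2 * Rabs (d2fwd d (line W D c2) D (z i) L 0))) by ring.
    apply Rmult_le_compat_l; [lra|].
    apply Rabs_d2fwd_le; auto; [apply Hseg; lra|apply frob_neg_grad_le].
Qed.

Lemma risk_descent :
  risk l n z d L (line W D eta) <= risk l n z d L W - eta * gnorm W ^ 2 / 2.
Proof.
  destruct (MVT_cor2 (fun s => risk l n z d L (line W D s)) phi' 0 eta eta_pos) as [c [E Hc]].
  { intros; apply derivable_risk_line. }
  simpl in E. rewrite line_0, Rminus_0_r in E.
  assert (Hvar := Rle_trans _ _ _ (Rle_abs _) (phi'_variation_le c ltac:(lra))).
  rewrite phi'_0 in Hvar.
  assert (HbR := betaR_pos Rw Rw_ge1). assert (Heb := eta_mul_betaR_le).
  assert (0 <= gnorm W ^ 2) by apply pow2_ge_0.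
  assert (c * gnorm W ^ 2 * betaR L beta Gb Rw <= gnorm W ^ 2).
  { replace (c * gnorm W ^ 2 * betaR L beta Gb Rw)
      with ((c * betaR L beta Gb Rw) * gnorm W ^ 2) by ring.
    rewrite <- (Rmult_1_l (gnorm W ^ 2)) at 2. apply Rmult_le_compat_r; [auto|].
    apply Rle_trans with (eta * betaR L beta Gb Rw); [apply Rmult_le_compat_r; lra|auto]. }
  assert (phi' c <= - gnorm W ^ 2 / 2) by lra.
  assert (phi' c * eta <= - gnorm W ^ 2 / 2 * eta) by (apply Rmult_le_compat_r; lra).
  lra.
Qed.

End Descent.

Lemma l_decreasing a b : a < b -> l b < l a.
Proof.
  intros Hab. destruct (MVT_cor2 l l' a b Hab) as [c [E _]]; [intros; apply Hl_der|].
  assert (l' c * (b - a) < 0) by (apply Rmult_neg_pos; [apply Hl'_neg|lra]). lra.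
Qed.

Lemma l_nonneg s : 0 <= l s.
Proof.
  destruct (Rle_or_lt 0 (l s)) as [|Hneg]; auto.
  destruct (Hl_pinf (- l s)) as [A HA]; [lra|].
  assert (Hlt : l (Rmax A (s + 1)) < l s)
    by (apply l_decreasing; generalize (Rmax_r A (s + 1)); lra).
  specialize (HA (Rmax A (s + 1)) (Rmax_l _ _)). rewrite Rabs_left in HA; lra.
Qed.

Lemma risk_nonneg W : 0 <= risk l n z d L W.
Proof.
  rewrite risk_mean. apply Rmult_le_pos; [|apply sumR_nonneg; intros; apply l_nonneg].
  destruct n as [|m]; [simpl; rewrite Rinv_0; lra|left; apply Rinv_0_lt_compat, lt_0_INR; lia].
Qed.

Lemma l_gt_near_0 r : r < l 0 -> exists a0, 0 < a0 /\ r < l a0.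
Proof.
  intros Hr. assert (HGb := Gb_pos). exists ((l 0 - r) / (2 * Gb)).
  set (a0 := (l 0 - r) / (2 * Gb)).
  assert (Ha0 : 0 < a0) by (apply Rdiv_lt_0_compat; lra). split; auto.
  destruct (MVT_cor2 l l' 0 a0 Ha0) as [c [E _]]; [intros; apply Hl_der|].
  assert (- Gb <= l' c) by (generalize (Hbnd c) (Hl'_neg c); rewrite Rabs_left by auto; lra).
  assert (Gb * a0 = (l 0 - r) / 2) by (unfold a0; field; lra).
  assert (l' c * (a0 - 0) >= - Gb * a0) by nra. lra.
Qed.

Lemma l'_neg_on_compact M :
  0 <= M -> exists m0, 0 < m0 /\ forall s, Rabs s <= M -> l' s <= - m0.
Proof.
  intros HM. destruct (continuity_ab_min (fun s => - l' s) (- M) M) as [s0 Hs0]; [lra| |].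
  { intros c _. apply continuity_pt_opp, Hl'_cont. }
  exists (- l' s0). split; [generalize (Hl'_neg s0); lra|].
  intros s Hs.
  assert (HsM : - M <= s <= M)
    by (generalize (Rle_abs s) (Rle_abs (- s)); rewrite Rabs_Ropp; lra).
  destruct Hs0 as [Hmin _]. specialize (Hmin s HsM). lra.
Qed.

Lemma separation_margin : (0 < n)%nat -> exists u gam, 0 < gam /\ 0 < nrm (d 0%nat) u /\
  forall i, (i < n)%nat -> gam <= inner (d 0%nat) u (z i).
Proof.
  intros Hn. destruct Hsep as [u Hu]. destruct (finite_pos_min n _ Hu) as [gam [Hgam Hle]].
  exists u, gam. split; [auto|split; [|auto]].
  destruct (nrm_nonneg (d 0%nat) u) as [|Hu0]; auto.
  assert (H := sumR_mul_le_nrm (d 0%nat) u (z 0%nat)). rewrite <- Hu0, Rmult_0_l in H.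
  specialize (Hu 0%nat Hn). generalize (Rle_abs (inner (d 0%nat) u (z 0%nat))).
  unfold inner, z in *. lra.
Qed.

Lemma output_inner W i : output W i = inner (d 0%nat) (wprod d L W) (z i).
Proof. unfold output, inner, wprod. rewrite prodMat_fwd by (rewrite HdL; lia). reflexivity. Qed.

Lemma fwd_wprod W : fwd d W (wprod d L W) L 0%nat = nrm (d 0%nat) (wprod d L W) ^ 2.
Proof.
  rewrite nrm_sq, <- prodMat_fwd by (rewrite HdL; lia).
  apply sumR_ext; intros; unfold wprod; ring.
Qed.

(* Moving the first layer along [first_layer_dir W u w_prod] increases every margin
   [<w_prod, z_i>] at rate at least [gam |w_prod|^2], so the risk decreases at rate at least
   [m0 gam |w_prod|^2]; Cauchy-Schwarz turns this into a lower bound on the gradient. *)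
Lemma margin_le_gnorm W Rb u gam m0 : (0 < n)%nat -> 0 < gam -> 0 < m0 ->
  (forall k, (1 <= k <= L)%nat -> frob d W k <= Rb) ->
  (forall i, (i < n)%nat -> gam <= inner (d 0%nat) u (z i)) ->
  (forall i, (i < n)%nat -> l' (output W i) <= - m0) ->
  m0 * gam * nrm (d 0%nat) (wprod d L W) ^ 2
  <= Rb * nrm (d 0%nat) (wprod d L W) * nrm (d 0%nat) u * gnorm W.
Proof.
  intros Hn Hgam Hm0 HW Hu Hl'. set (w := wprod d L W). set (E := first_layer_dir d W u w).
  assert (Hw := nrm_nonneg (d 0%nat) w).
  assert (Hdir : dirDeriv W E <= - (m0 * gam) * nrm (d 0%nat) w ^ 2).
  { apply mean_le; auto. intros i Hi.
    unfold E. rewrite dfwd_first_layer_dir, fwd_wprod by auto. fold w.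
    assert (l' (output W i) * inner (d 0%nat) u (z i) <= - (m0 * gam)).
    { assert (Hui := Hu i Hi). assert (Hli := Hl' i Hi).
      apply Rle_trans with (- m0 * inner (d 0%nat) u (z i)); [apply Rmult_le_compat_r; lra|nra]. }
    rewrite <- Rmult_assoc. apply Rmult_le_compat_r; [apply pow2_ge_0|auto]. }
  assert (HE : Rabs (dirDeriv W E) <= Rb * nrm (d 0%nat) w * nrm (d 0%nat) u * gnorm W).
  { rewrite dirDeriv_coord. eapply Rle_trans; [apply Rabs_coordSum_mul_le|].
    unfold E. rewrite pnorm_first_layer_dir by auto. fold (gnorm W).
    apply Rmult_le_compat_r; [apply pnorm_nonneg|]. apply Rmult_le_compat_r; [apply nrm_nonneg|].
    eapply Rle_trans; [apply nrm_mulmx_le|]. rewrite <- frob_S.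
    apply Rmult_le_compat_r; [auto|apply HW; lia]. }
  generalize (Rle_abs (- dirDeriv W E)). rewrite Rabs_Ropp. lra.
Qed.

Lemma gnorm_lower_bound Rb r : (0 < n)%nat -> 1 <= Rb -> r < l 0 ->
  exists c, 0 < c /\ forall W, (forall k, (1 <= k <= L)%nat -> frob d W k <= Rb) ->
    risk l n z d L W <= r -> c <= gnorm W.
Proof.
  intros Hn HRb Hr.
  destruct (separation_margin Hn) as [u [gam [Hgam [Hu Hmargin]]]].
  destruct (l'_neg_on_compact (Rb ^ L)) as [m0 [Hm0 Hl'm0]]; [apply pow_le; lra|].
  destruct (l_gt_near_0 r Hr) as [a0 [Ha0 Hla0]].
  exists (m0 * gam * a0 / (Rb * nrm (d 0%nat) u)).
  split; [apply Rdiv_lt_0_compat; apply Rmult_lt_0_compat; try apply Rmult_lt_0_compat; lra|].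
  intros W HW Hrisk.
  assert (Hex : exists i, (i < n)%nat /\ l (output W i) <= r).
  { apply NNPP. intros Hno. assert (r < risk l n z d L W); [|lra].
    rewrite risk_mean. apply mean_gt; auto. intros i Hi.
    destruct (Rle_or_lt (l (output W i)) r); auto. exfalso; apply Hno; exists i; auto. }
  destruct Hex as [i0 [Hi0 Hli0]].
  set (nw := nrm (d 0%nat) (wprod d L W)).
  assert (Hnw : a0 <= nw).
  { assert (a0 <= output W i0).
    { destruct (Rle_or_lt a0 (output W i0)) as [|Hlt]; auto.
      generalize (l_decreasing _ _ Hlt). lra. }
    rewrite output_inner in H. eapply Rle_trans; [apply H|].
    eapply Rle_trans; [apply Rle_abs|]. eapply Rle_trans; [apply sumR_mul_le_nrm|].
    fold nw. generalize (z_nrm_le i0 Hi0) (nrm_nonneg (d 0%nat) (z i0)). unfold nw.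
    generalize (nrm_nonneg (d 0%nat) (wprod d L W)). nra. }
  assert (Hm := margin_le_gnorm W Rb u gam m0 Hn Hgam Hm0 HW Hmargin
    (fun i Hi => Hl'm0 _ (Rabs_output_le W Rb HRb HW i Hi))). fold nw in Hm.
  assert (Hg := pnorm_nonneg d L (G W)). fold (gnorm W) in Hg.
  apply Rmult_le_reg_l with (Rb * nrm (d 0%nat) u); [apply Rmult_lt_0_compat; lra|].
  replace (Rb * nrm (d 0%nat) u * (m0 * gam * a0 / (Rb * nrm (d 0%nat) u))) with (m0 * gam * a0)
    by (field; split; lra).
  apply Rmult_le_reg_r with nw; [lra|].
  assert (0 < m0 * gam) by (apply Rmult_lt_0_compat; lra).
  apply Rle_trans with (m0 * gam * nw ^ 2).
  - replace (m0 * gam * nw ^ 2) with (m0 * gam * nw * nw) by ring.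
    apply Rmult_le_compat_r; [lra|]. apply Rmult_le_compat_l; lra.
  - replace (Rb * nrm (d 0%nat) u * gnorm W * nw) with (Rb * nw * nrm (d 0%nat) u * gnorm W) by ring.
    exact Hm.
Qed.

Section Trajectory.

Variables (W : nat -> Params) (Rad : nat -> R).
Hypothesis HGD : forall t k i j,
  W (S t) k i j = W t k i j - stepsize L beta Gb Rad t * G (W t) k i j.
Hypothesis HRad : forall t, inBall d L (Rad t - 1) (W t).
Hypothesis HRad_step : forall t, inBall d L (Rad t - 1) (W (S t)) -> Rad (S t) = Rad t.
Hypothesis HA2_grad : exists k i j, (1 <= k <= L)%nat /\ (i < d k)%nat /\
  (j < d (k - 1))%nat /\ G (W 0%nat) k i j <> 0.
Hypothesis HA2_risk : risk l n z d L (W 0%nat) <= l 0.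

Let eta (t : nat) : R := stepsize L beta Gb Rad t.

Lemma frob_traj_le t k : (1 <= k <= L)%nat -> frob d (W t) k <= Rad t - 1.
Proof. intros Hk. eapply Rle_trans; [apply frob_le_maxFrob, Hk|apply HRad]. Qed.

Lemma Rad_ge1 t : 1 <= Rad t.
Proof. generalize (HRad t) (maxFrob_nonneg d (W t) L HL). unfold inBall. lra. Qed.

Lemma eta_pos t : 0 < eta t.
Proof.
  apply Rmin_glb_lt; [|lra]. apply Rdiv_lt_0_compat; [lra|apply betaR_pos, Rad_ge1].
Qed.

Lemma eta_le_1 t : eta t <= 1.
Proof. apply Rmin_r. Qed.

Lemma W_succ t : W (S t) = line (W t) (fun k a b => - G (W t) k a b) (eta t).
Proof.
  extensionality k; extensionality i; extensionality j.
  rewrite HGD. unfold line, eta. ring.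
Qed.

Lemma risk_step t : risk l n z d L (W (S t)) <= risk l n z d L (W t) - eta t * gnorm (W t) ^ 2 / 2.
Proof.
  rewrite W_succ. apply (risk_descent (W t) (Rad t)).
  - apply Rad_ge1.
  - intros; apply frob_traj_le; auto.
  - apply eta_pos.
  - apply Rmin_l.
Qed.

Lemma eta_gnorm_sq_nonneg t : 0 <= eta t * gnorm (W t) ^ 2.
Proof. apply Rmult_le_pos; [left; apply eta_pos|apply pow2_ge_0]. Qed.

Lemma sum_eta_gnorm_sq_le N : sumR N (fun t => eta t * gnorm (W t) ^ 2) <= 2 * l 0.
Proof.
  assert (H : forall N, sumR N (fun t => eta t * gnorm (W t) ^ 2)
                        <= 2 * (risk l n z d L (W 0%nat) - risk l n z d L (W N))).
  { induction N0 as [|N0 IH]; cbn [sumR]; [lra|]. generalize (risk_step N0). lra. }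
  generalize (H N) (risk_nonneg (W N)). lra.
Qed.

Lemma n_pos : (0 < n)%nat.
Proof.
  destruct HA2_grad as [k [i [j [Hk [Hi [Hj HG0]]]]]].
  destruct (Nat.eq_dec n 0) as [En|]; [|lia]. exfalso. apply HG0.
  rewrite G_coord by auto. unfold dirDeriv, mean. rewrite En. simpl. ring.
Qed.

Lemma gnorm0_pos : 0 < gnorm (W 0%nat).
Proof.
  destruct HA2_grad as [k [i [j [Hk [Hi [Hj HG0]]]]]].
  apply Rlt_le_trans with (Rabs (G (W 0%nat) k i j)); [apply Rabs_pos_lt; auto|].
  apply Rabs_le_pnorm; auto.
Qed.

Lemma risk1_lt : risk l n z d L (W 1%nat) < l 0.
Proof.
  generalize (risk_step 0) (Rmult_lt_0_compat _ _ (eta_pos 0) (pow_lt _ 2 gnorm0_pos)). lra.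
Qed.

Lemma risk_le_risk1 t : (1 <= t)%nat -> risk l n z d L (W t) <= risk l n z d L (W 1%nat).
Proof.
  induction t as [|t IH]; intros Ht; [lia|]. destruct t as [|t]; [lra|].
  generalize (risk_step (S t)) (eta_gnorm_sq_nonneg (S t)) (IH ltac:(lia)). lra.
Qed.

Lemma gnorm_lower_bound_traj Rb : 1 <= Rb ->
  exists c, 0 < c /\ forall t, (1 <= t)%nat -> maxFrob d (W t) L <= Rb -> c <= gnorm (W t).
Proof.
  intros HRb. destruct (gnorm_lower_bound Rb (risk l n z d L (W 1%nat)) n_pos HRb risk1_lt)
    as [c [Hc Hle]].
  exists c. split; auto. intros t Ht HW. apply Hle; [|apply risk_le_risk1; auto].
  intros k Hk. eapply Rle_trans; [apply frob_le_maxFrob, Hk|auto].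
Qed.

Lemma Rad_le_succ t : Rad t <= Rad (S t).
Proof.
  destruct (classic (inBall d L (Rad t - 1) (W (S t)))) as [Hin|Hout].
  - rewrite HRad_step by auto. lra.
  - generalize (HRad (S t)). unfold inBall in *. lra.
Qed.

Lemma Rad_le_add t k : Rad t <= Rad (t + k).
Proof.
  induction k as [|k IH]; [rewrite Nat.add_0_r; lra|].
  rewrite Nat.add_succ_r. eapply Rle_trans; [apply IH|apply Rad_le_succ].
Qed.

(* Once [Rad t0 - 1] exceeds a bound on all the iterates, the radius never moves again. *)
Lemma Rad_bounded M : (forall t, maxFrob d (W t) L <= M) -> exists Rm, forall t, Rad t <= Rm.
Proof.
  intros HM. destruct (classic (exists t0, M + 1 <= Rad t0)) as [[t0 Ht0]|Hno].
  - exists (Rad t0).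
    assert (Hconst : forall k, Rad (t0 + k) = Rad t0).
    { induction k as [|k IH]; [rewrite Nat.add_0_r; auto|].
      rewrite Nat.add_succ_r, HRad_step, IH; auto.
      unfold inBall. rewrite IH. generalize (HM (S (t0 + k))). lra. }
    intros t. destruct (Nat.le_gt_cases t t0).
    + replace t0 with (t + (t0 - t))%nat by lia. apply Rad_le_add.
    + replace t with (t0 + (t - t0))%nat by lia. rewrite Hconst. lra.
  - exists (M + 1). intros t. apply Rnot_lt_le. intros Hlt. apply Hno. exists t. lra.
Qed.

Lemma eta_lower_bound Rm : (forall t, Rad t <= Rm) ->
  forall t, Rmin (1 / betaR L beta Gb Rm) 1 <= eta t.
Proof.
  intros HRm t. apply Rle_min_compat_r. unfold Rdiv. rewrite !Rmult_1_l.
  apply Rinv_le_contravar; [apply betaR_pos, Rad_ge1|].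
  apply betaR_le; [generalize beta_nonneg Gb_pos; lra|split; [apply Rad_ge1|auto]].
Qed.

Lemma frob_succ_le t k : (1 <= k <= L)%nat ->
  frob d (W (S t)) k <= frob d (W t) k + eta t * gnorm (W t).
Proof.
  intros Hk. rewrite W_succ. eapply Rle_trans; [apply frob_line_le; left; apply eta_pos|].
  apply Rplus_le_compat_l, Rmult_le_compat_l; [left; apply eta_pos|apply frob_neg_grad_le; auto].
Qed.

Lemma maxFrob_unbounded : forall M, exists t, M < maxFrob d (W t) L.
Proof.
  intros M. apply NNPP. intros Hno.
  assert (HM : forall t, maxFrob d (W t) L <= M)
    by (intros t; apply Rnot_lt_le; intros Hlt; apply Hno; exists t; auto).
  destruct (Rad_bounded M HM) as [Rm HRm].
  set (emin := Rmin (1 / betaR L beta Gb Rm) 1).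
  assert (Hemin : 0 < emin).
  { apply Rmin_glb_lt; [|lra]. apply Rdiv_lt_0_compat; [lra|apply betaR_pos].
    generalize (Rad_ge1 0) (HRm 0%nat). lra. }
  destruct (gnorm_lower_bound_traj (Rmax M 1) (Rmax_r _ _)) as [c [Hc Hcle]].
  assert (Hstep : forall t, (1 <= t)%nat -> emin * c ^ 2 <= eta t * gnorm (W t) ^ 2).
  { intros t Ht. apply Rmult_le_compat; [lra|apply pow2_ge_0|apply eta_lower_bound; auto|].
    apply pow_incr. split; [lra|]. apply Hcle; auto. eapply Rle_trans; [apply HM|apply Rmax_l]. }
  assert (Hsum : forall N, INR N * (emin * c ^ 2) <= sumR (S N) (fun t => eta t * gnorm (W t) ^ 2)).
  { induction N as [|N IH].
    - cbn [sumR]. rewrite Rmult_0_l, Rplus_0_l. apply eta_gnorm_sq_nonneg.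
    - rewrite S_INR. change (sumR (S (S N)) (fun t => eta t * gnorm (W t) ^ 2))
        with (sumR (S N) (fun t => eta t * gnorm (W t) ^ 2) + eta (S N) * gnorm (W (S N)) ^ 2).
      generalize (Hstep (S N) ltac:(lia)). lra. }
  destruct (INR_archimed (emin * c ^ 2) (2 * l 0)) as [N HN].
  { apply Rmult_lt_0_compat; [auto|apply pow_lt; auto]. }
  generalize (Hsum N) (sum_eta_gnorm_sq_le (S N)). lra.
Qed.

(* Cauchy-Schwarz: the distance travelled is at most [sqrt (sum eta * sum eta |G|^2)]. *)
Lemma sum_eta_gnorm_le N M : sumR N eta <= M ->
  sumR N (fun t => eta t * gnorm (W t)) <= sqrt (M * (2 * l 0)).
Proof.
  intros HM. assert (Hl0 := l_nonneg 0).
  assert (0 <= sumR N eta) by (apply sumR_nonneg; intros; left; apply eta_pos).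
  assert (Heta : forall t, sqrt (eta t) ^ 2 = eta t) by (intros; apply pow2_sqrt; left; apply eta_pos).
  eapply Rle_trans; [apply Rle_abs|]. apply Rabs_le_of_sq_le; [apply sqrt_pos|].
  rewrite pow2_sqrt by (apply Rmult_le_pos; lra).
  rewrite (sumR_ext N _ (fun t => sqrt (eta t) * (sqrt (eta t) * gnorm (W t))))
    by (intros t _; rewrite <- Rmult_assoc, sqrt_sqrt by (left; apply eta_pos); reflexivity).
  eapply Rle_trans; [apply sumR_cauchy_schwarz|].
  apply Rmult_le_compat; try (apply sumR_nonneg; intros; apply pow2_ge_0).
  - rewrite (sumR_ext N _ eta) by auto. auto.
  - eapply Rle_trans; [|apply (sum_eta_gnorm_sq_le N)]. right. apply sumR_ext; intros t _.
    rewrite Rpow_mult_distr, Heta. reflexivity.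
Qed.

Lemma frob_le_travel N k : (1 <= k <= L)%nat ->
  frob d (W N) k <= frob d (W 0%nat) k + sumR N (fun t => eta t * gnorm (W t)).
Proof.
  intros Hk. induction N as [|N IH]; [simpl; lra|].
  eapply Rle_trans; [apply frob_succ_le; auto|]. cbn [sumR]. lra.
Qed.

Lemma stepsizes_not_summable : cv_infty (fun N => sumR N eta).
Proof.
  intros M. destruct (classic (exists N, M < sumR N eta)) as [[N HN]|Hno].
  - exists N. intros m Hm. replace m with (N + (m - N))%nat by lia.
    induction (m - N)%nat as [|k IH]; [rewrite Nat.add_0_r; auto|].
    rewrite Nat.add_succ_r. cbn [sumR]. generalize (eta_pos (N + k)). lra.
  - exfalso.
    assert (HM : forall N, sumR N eta <= M)
      by (intros N; apply Rnot_lt_le; intros Hlt; apply Hno; exists N; auto).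
    destruct (maxFrob_unbounded (maxFrob d (W 0%nat) L + sqrt (M * (2 * l 0)))) as [N HN].
    assert (maxFrob d (W N) L <= maxFrob d (W 0%nat) L + sqrt (M * (2 * l 0))); [|lra].
    apply maxFrob_le; auto. intros k Hk.
    eapply Rle_trans; [apply frob_le_travel; auto|].
    apply Rplus_le_compat; [apply frob_le_maxFrob; auto|apply sum_eta_gnorm_le; auto].
Qed.

Lemma stepsizes_summable_in_ball Rb :
  exists s, Un_cv (fun N => sumR N (fun t =>
    match Rle_dec (maxFrob d (W t) L) Rb with left _ => eta t | right _ => 0 end)) s.
Proof.
  set (f := fun t => match Rle_dec (maxFrob d (W t) L) Rb with left _ => eta t | right _ => 0 end).
  destruct (gnorm_lower_bound_traj (Rmax Rb 1) (Rmax_r _ _)) as [c [Hc Hcle]].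
  assert (Hc2 : 0 < c ^ 2) by (apply pow_lt; auto).
  assert (Hf : forall t, 0 <= f t <= 1).
  { intros t. unfold f. destruct (Rle_dec _ _); [split; [left; apply eta_pos|apply eta_le_1]|lra]. }
  assert (Hfc : forall t, (1 <= t)%nat -> f t * c ^ 2 <= eta t * gnorm (W t) ^ 2).
  { intros t Ht. unfold f.
    destruct (Rle_dec _ _) as [Hin|]; [|rewrite Rmult_0_l; apply eta_gnorm_sq_nonneg].
    apply Rmult_le_compat_l; [left; apply eta_pos|]. apply pow_incr. split; [lra|].
    apply Hcle; auto. eapply Rle_trans; [apply Hin|apply Rmax_l]. }
  assert (Hpartial : forall N,
    sumR (S N) f * c ^ 2 <= c ^ 2 + sumR (S N) (fun t => eta t * gnorm (W t) ^ 2)).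
  { induction N as [|N IH].
    - cbn [sumR]. rewrite !Rplus_0_l. generalize (Hf 0%nat) (eta_gnorm_sq_nonneg 0). nra.
    - change (sumR (S (S N)) f) with (sumR (S N) f + f (S N)).
      change (sumR (S (S N)) (fun t => eta t * gnorm (W t) ^ 2))
        with (sumR (S N) (fun t => eta t * gnorm (W t) ^ 2) + eta (S N) * gnorm (W (S N)) ^ 2).
      generalize (Hfc (S N) ltac:(lia)). lra. }
  destruct (growing_cv (fun N => sumR N f)) as [s Hs].
  - intros N. cbn [sumR]. generalize (Hf N). lra.
  - exists (1 + 2 * l 0 / c ^ 2). intros r [N ->].
    apply Rle_trans with (sumR (S N) f); [cbn [sumR]; generalize (Hf N); lra|].
    apply Rmult_le_reg_r with (c ^ 2); auto.
    replace ((1 + 2 * l 0 / c ^ 2) * c ^ 2) with (c ^ 2 + 2 * l 0) by (field; lra).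
    generalize (Hpartial N) (sum_eta_gnorm_sq_le (S N)). lra.
  - exists s. exact Hs.
Qed.

End Trajectory.

End Training.
Theorem mainTheorem10
  (n : nat) (d : nat -> nat) (L : nat)
  (x : nat -> nat -> R) (y : nat -> R)
  (Hy : forall i, (i < n)%nat -> y i = 1 \/ y i = -1)
  (Hx : forall i, (i < n)%nat ->
          sqrt (sumR (d 0%nat) (fun j => (x i j) ^ 2)) <= 1)
  (Hsep : exists u : nat -> R, forall i, (i < n)%nat ->
          0 < inner (d 0%nat) u (fun j => y i * x i j))
  (HL : (1 <= L)%nat) (HdL : d L = 1%nat)
  (l l' : R -> R) (beta Gb : R)
  (Hl_der : forall s, derivable_pt_lim l s (l' s))
  (Hl'_cont : continuity l')
  (Hl'_neg : forall s, l' s < 0)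
  (Hl_minf : forall M, exists A, forall s, s <= A -> M <= l s)
  (Hl_pinf : forall eps, 0 < eps -> exists A, forall s, A <= s -> Rabs (l s) < eps)
  (Hlip : forall s r, Rabs (l' s - l' r) <= beta * Rabs (s - r))
  (Hbnd : forall s, Rabs (l' s) <= Gb)
  (G : Params -> Params)
  (HG : is_gradient d L (risk l n (fun i j => y i * x i j) d L) G)
  (W : nat -> Params) (Rad : nat -> R)
  (HGD : forall t k i j,
     W (S t) k i j = W t k i j - stepsize L beta Gb Rad t * G (W t) k i j)
  (HRad : forall t, inBall d L (Rad t - 1) (W t))
  (HRad_step : forall t, inBall d L (Rad t - 1) (W (S t)) -> Rad (S t) = Rad t)
  (HA2_grad : exists k i j, (1 <= k <= L)%nat /\ (i < d k)%nat /\
      (j < d (k - 1))%nat /\ G (W 0%nat) k i j <> 0)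
  (HA2_risk : risk l n (fun i j => y i * x i j) d L (W 0%nat) <= l 0) :
  (forall M : R, exists t, M < maxFrob d (W t) L) /\
  cv_infty (fun N => sumR N (stepsize L beta Gb Rad)) /\
  (forall Rb : R, 0 < Rb ->
     exists s : R, Un_cv (fun N => sumR N (fun t =>
        match Rle_dec (maxFrob d (W t) L) Rb with
        | left _ => stepsize L beta Gb Rad t
        | right _ => 0
        end)) s).
Proof.
  split; [|split].
  - eapply maxFrob_unbounded; eauto.
  - eapply stepsizes_not_summable; eauto.
  - intros Rb _. eapply stepsizes_summable_in_ball; eauto.
Qed.
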